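(* Let $N\ge1$ and consider the MT process with modified absorption time $\tau^*$ and transient set $S^*$ as in the context. The quasi-stationary distribution $\nu^*$ (the unique QSD charging $(N,1)$, which is also the limit $\lim_{t\to\infty}P_{(N,1)}((X_t,Y_t)=(x,y)\mid\tau^*>t)$) is given by $$\nu^*(x,y)=\begin{cases} C_N^{-1} & (x,y)=(N,1),\\[2pt] C_N^{-1}\dfrac{\lambda_0}{\lambda_1-\lambda_0} & (x,y)=(N-1,2),\\[2pt] C_N^{-1}\displaystyle\sum_{\gamma\in\Gamma_{(x,y)}}\frac{\lambda_0}{\lambda_L-\lambda_0}\prod_{j=1}^{L-1}\frac{\rho_j}{\lambda_j-\lambda_0} & \text{otherwise},\end{cases}$$ where, for a path $\gamma=(v_0,\dots,v_L)\in\Gamma_{(x,y)}$ with $v_j=(x_j,y_j)$, $\lambda_0=\rho_0=N$, $\lambda_j=Ny_j$, and $\rho_j=x_jy_j$ if $v_{j+1}-v_j=(-1,1)$, $\rho_j=y_j(N-x_j)$ if $v_{j+1}-v_j=(0,-1)$; here $L=2N-2x-y+1$ (so $\lambda_L=Ny$), and $C_N$ is the normalizing constant making $\sum_{(x,y)\in S^*}\nu^*(x,y)=1$.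
   Context: MT model: population of size $N+1$; $X_t$, $Y_t$ are the numbers of ignorants and spreaders; continuous-time Markov chain on $\{(x,y)\in\mathbb{Z}^2:0\le x\le N,\,0\le y\le N+1-x\}$ with transitions $(X,Y)\to(X-1,Y+1)$ at rate $XY$ and $(X,Y)\to(X,Y-1)$ at rate $Y(N-X)$ (total rate $NY$). Modified transient set $S^*=\{(N,1)\}\cup\{(x,y)\in\mathbb{Z}^2:0\le x\le N,\ 2\le y\le N+1-x\}$; modified absorption time $\tau^*=\inf\{t>0: Y_t\le1,\ X_t\le N-1\}$ (the process is killed upon first return to level $y=1$ after leaving $(N,1)$). A QSD is a probability measure $\nu$ on $S^*$ with $P_\nu((X_t,Y_t)\in A\mid\tau^*>t)=\nu(A)$ for all $t\ge0$, $A\subset S^*$. Paths: with $\mathcal{E}=\{(-1,1),(0,-1)\}$, $\Gamma_{(x,y)}$ is the set of sequences $v_0=(N,1),v_1,\dots,v_L=(x,y)$ of states all lying in $S^*$ with $v_{j+1}-v_j\in\mathcal{E}$ for every $j$; each such path has $N-x$ steps $(-1,1)$ and $N+1-x-y$ steps $(0,-1)$, hence length $L=2N-2x-y+1$. *)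

From HB Require Import structures.
From mathcomp Require Import all_boot all_order all_algebra.
From mathcomp Require Import all_classical all_reals all_analysis.
Unset Printing Implicit Defensive.
Import Order.TTheory GRing.Theory Num.Theory.
Import numFieldNormedType.Exports.
Local Open Scope ring_scope.

Definition grid (N : nat) : finType := ('I_N.+1 * 'I_N.+2)%type.

Definition xc {N} (a : grid N) : nat := nat_of_ord a.1.
Definition yc {N} (a : grid N) : nat := nat_of_ord a.2.

Definition inS (N : nat) (a : grid N) : bool :=
  ((xc a == N) && (yc a == 1%N)) || ((2 <= yc a)%N && (xc a + yc a <= N.+1)%N).

Definition stepUp {N} (a b : grid N) : bool :=
  ((xc b).+1 == xc a) && (yc b == (yc a).+1).
Definition stepDown {N} (a b : grid N) : bool :=
  (xc b == xc a) && ((yc b).+1 == yc a).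

Definition rate {R : realType} (N : nat) (a b : grid N) : R :=
  if stepUp a b then (xc a * yc a)%:R
  else if stepDown a b then (yc a * (N - xc a))%:R else 0.

(* Sub-generator of the chain killed at tau_star (restricted to Sstar):
   off-diagonal rates inside Sstar, diagonal = - total jump rate N*Y. *)
Definition Qkill {R : realType} (N : nat) (a b : grid N) : R :=
  if inS N a && inS N b then
    (if a == b then - (N * yc a)%:R else rate N a b)
  else 0.

Definition actM {R : realType} {T : finType} (M : T -> T -> R) (mu : T -> R) : T -> R :=
  fun b => \sum_(a : T) mu a * M a b.

(* mu e^{t Qkill}: (mu P^*_t)(b) = P_mu((X_t,Y_t) = b, tau_star > t) *)
Definition evol {R : realType} (N : nat) (mu : grid N -> R) (t : R) (b : grid N) : R :=
  limn (series (fun k : nat => t ^+ k / (k`!)%:R * iter k (actM (Qkill N)) mu b)).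

Definition condP {R : realType} (N : nat) (mu : grid N -> R) (t : R) (A : {set grid N}) : R :=
  (\sum_(b in A) evol N mu t b) / (\sum_(b | inS N b) evol N mu t b).

Definition probS {R : realType} (N : nat) (nu : grid N -> R) : Prop :=
  [/\ forall a, 0 <= nu a, forall a, ~~ inS N a -> nu a = 0
    & \sum_(a | inS N a) nu a = 1].

Definition isQSD {R : realType} (N : nat) (nu : grid N -> R) : Prop :=
  probS N nu /\
  forall t : R, 0 <= t -> forall A : {set grid N}, {subset A <= inS N} ->
    condP N nu t A = \sum_(a in A) nu a.

Definition startN1 {R : realType} (N : nat) (a : grid N) : R :=
  if (xc a == N) && (yc a == 1%N) then 1 else 0.

(* Paths in Gamma_(x,y), of length L, as (L+1)-tuples v_0..v_L *)
Definition defpt (N : nat) : grid N := (ord0, ord0).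

Definition isPath (N : nat) (a : grid N) (L : nat) (p : L.+1.-tuple (grid N)) : bool :=
  [&& (xc (nth (defpt N) p 0) == N) && (yc (nth (defpt N) p 0) == 1%N),
      nth (defpt N) p L == a,
      all (inS N) p &
      [forall j : 'I_L, stepUp (nth (defpt N) p j) (nth (defpt N) p j.+1)
                     || stepDown (nth (defpt N) p j) (nth (defpt N) p j.+1)]].

Definition pathL (N : nat) (a : grid N) : nat := (2 * N + 1 - (2 * xc a + yc a))%N.

Definition lam0 {R : realType} (N : nat) : R := N%:R.

Definition weight {R : realType} (N L : nat) (p : L.+1.-tuple (grid N)) : R :=
  let v j := nth (defpt N) p j in
  let lam j := (N * yc (v j))%:R : R in
  let rho j : R := if stepUp (v j) (v j.+1) then (xc (v j) * yc (v j))%:R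
                   else (yc (v j) * (N - xc (v j)))%:R in
  lam0 N / (lam L - lam0 N) *
  \prod_(1 <= j < L) (rho j / (lam j - lam0 N)).

Definition nuU {R : realType} (N : nat) (a : grid N) : R :=
  if (xc a == N) && (yc a == 1%N) then 1
  else if (xc a == N.-1) && (yc a == 2%N) then lam0 N / ((N * 2)%:R - lam0 N)
  else if inS N a then
    \sum_(p : (pathL N a).+1.-tuple (grid N) | isPath N a (pathL N a) p) weight N (pathL N a) p
  else 0.

Definition CN {R : realType} (N : nat) : R := \sum_(a | inS N a) (@nuU R N a).

Definition nustar {R : realType} (N : nat) (a : grid N) : R := nuU N a / CN N.

From HB Require Import structures.
From mathcomp Require Import all_boot all_order all_algebra.
From mathcomp Require Import all_classical all_reals all_analysis.
From mathcomp Require Import ring lra zify.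
Import Order.TTheory GRing.Theory Num.Theory.
Import numFieldNormedType.Exports.
Local Open Scope classical_set_scope.
Local Open Scope ring_scope.

(* Order the states of S* by the level [pathL] = 2N + 1 - 2x - y: every
   transition of the killed chain raises it by one, and (N,1) is the only state
   of level 0, where the killed generator Q has the largest diagonal entry -N.
   Hence a left eigenvector of Q for -N is determined by its value at (N,1)
   through nu(b) (N y_b - N) = sum_a nu(a) Q(a,b); unrolling this recursion
   along paths gives the formula for nu*, which after normalisation is a QSD.
   Conversely a QSD charging (N,1) satisfies mu e^{tQ} = e^{-Nt} mu, and
   differentiating at t = 0 shows that it is such an eigenvector.  For the
   Yaglom limit, e^{Nt} P_(N,1)(X_t = b, tau* > t) - nu(b) solves a linear ODE
   with decay rate N y_b - N > 0, driven by the same errors at lower levels, so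
   it tends to 0 by induction on the level. *)

Section RowExponential.
Context {R : realType} {T : finType} (Q : T -> T -> R).
Local Notation A := (actM Q).

Definition evolQ (mu : T -> R) (t : R) (b : T) : R :=
  limn (series (fun k : nat => t ^+ k / (k`!)%:R * iter k A mu b)).

Definition evolQ_coef (mu : T -> R) (b : T) (k : nat) : R :=
  iter k A mu b / (k`!)%:R.

Lemma evolQE mu t b : evolQ mu t b = limn (pseries (evolQ_coef mu b) t).
Proof.
rewrite /evolQ /pseries /evolQ_coef.
suff -> : (fun k : nat => t ^+ k / (k`!)%:R * iter k A mu b) =
  (fun k => iter k A mu b / (k`!)%:R * t ^+ k) by [].
by apply/funext => k; ring.
Qed.

Lemma iter_actM_bound mu : exists C M : R, [/\ 0 <= C, 0 <= M &
  forall k b, `|iter k A mu b| <= C * M ^+ k].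
Proof.
pose M := \sum_a \sum_b `|Q a b|; pose C := \sum_b `|mu b|.
have M0 : 0 <= M by rewrite sumr_ge0 // => a _; rewrite sumr_ge0.
have l1_bound k : \sum_b `|iter k A mu b| <= C * M ^+ k.
  elim: k => [|k IHk]; first by rewrite expr0 mulr1.
  rewrite iterS /actM.
  apply: (le_trans (y := \sum_b \sum_a `|iter k A mu a| * `|Q a b|)).
    apply: ler_sum => b _; apply: (le_trans (ler_norm_sum _ _ _)).
    by apply: ler_sum => a _; rewrite normrM.
  rewrite exchange_big /=.
  apply: (le_trans (y := \sum_a `|iter k A mu a| * M)).
    apply: ler_sum => a _; rewrite -mulr_sumr ler_wpM2l //.
    by rewrite /M [leRHS](bigD1 a) //= lerDl sumr_ge0 // => i _; rewrite sumr_ge0.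
  by rewrite -mulr_suml exprSr mulrA ler_wpM2r.
have C0 : 0 <= C by rewrite sumr_ge0.
exists C, M; split => // k b.
apply: le_trans (l1_bound k).
by rewrite [leRHS](bigD1 b) //= lerDl sumr_ge0.
Qed.

Lemma is_cvg_pseries_evolQ_coef mu b x : cvgn (pseries (evolQ_coef mu b) x).
Proof.
have [C [M [C0 M0 bound]]] := iter_actM_bound mu.
apply: normed_cvg.
apply: (@series_le_cvg _ _ (fun n => C * exp_coeff (M * `|x|) n)).
- by move=> n; exact: normr_ge0.
- by move=> n; rewrite /= mulr_ge0 // divr_ge0 // exprn_ge0 // mulr_ge0.
- move=> n /=; rewrite !normrM normfV normrX [`|(n`!)%:R|]ger0_norm //.
  apply: (le_trans (y := C * M ^+ n / (n`!)%:R * `|x| ^+ n)).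
    by rewrite ler_wpM2r ?exprn_ge0 // ler_wpM2r // invr_ge0.
  by rewrite /exp_coeff /= exprMn le_eqVlt; apply/orP; left; apply/eqP; ring.
- exact: is_cvg_seriesZ (is_cvg_series_exp_coeff (M * `|x|)).
Qed.

Lemma pseries_diffs_evolQ_coef mu b :
  pseries_diffs (evolQ_coef mu b) = evolQ_coef (A mu) b.
Proof.
apply/funext => i; rewrite /pseries_diffs /evolQ_coef iterSr factS natrM invfM.
by field; rewrite pnatr_eq0 -lt0n fact_gt0 /= [1 + _]addrC natr1 pnatr_eq0.
Qed.

Lemma evolQ_derive mu b t :
  is_derive t (1 : R) (fun s => evolQ mu s b) (evolQ (A mu) t b).
Proof.
under eq_fun do rewrite evolQE.
rewrite evolQE -pseries_diffs_evolQ_coef.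
apply: (@pseries_snd_diffs _ _ (`|t| + 1));
  rewrite ?pseries_diffs_evolQ_coef; try exact: is_cvg_pseries_evolQ_coef.
by rewrite [ltRHS]ger0_norm ?ltrDl // addr_ge0.
Qed.

Lemma evolQ_actM mu t b : evolQ (A mu) t b = \sum_a evolQ mu t a * Q a b.
Proof.
rewrite /evolQ; apply: cvg_lim => //.
have -> : series (fun k : nat => t ^+ k / (k`!)%:R * iter k A (A mu) b) =
    (fun n => \sum_a series (fun k : nat => t ^+ k / (k`!)%:R * iter k A mu a) n * Q a b).
  apply/funext => n; rewrite /series /=.
  under eq_bigr do rewrite -iterSr iterS /actM mulr_sumr.
  rewrite exchange_big /=; apply: eq_bigr => a _.
  by rewrite mulr_suml; apply: eq_bigr => k _; rewrite mulrA.
apply: cvg_big => //; first exact: add_continuous.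
move=> a _; apply: cvgM; last exact: cvg_cst.
have -> : (fun k : nat => t ^+ k / (k`!)%:R * iter k A mu a) =
    (fun k => evolQ_coef mu a k * t ^+ k).
  by apply/funext => k; rewrite /evolQ_coef; ring.
exact: is_cvg_pseries_evolQ_coef.
Qed.

Lemma evolQ_geometric mu b c : (forall k, iter k A mu b = c ^+ k * mu b) ->
  forall t, evolQ mu t b = expR (c * t) * mu b.
Proof.
move=> iterE t; rewrite /evolQ.
have -> : (fun k : nat => t ^+ k / (k`!)%:R * iter k A mu b) =
    (fun k => mu b * exp_coeff (c * t) k).
  by apply/funext => k; rewrite iterE /exp_coeff /= exprMn; ring.
rewrite [RHS]mulrC -[RHS]/(mu b *: expR (c * t)).
exact: lim_seriesZ (mu b) (is_cvg_series_exp_coeff (c * t)).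
Qed.

Lemma evolQ_autonomous_coord {b c} : (forall nu, A nu b = c * nu b) ->
  forall mu t, evolQ mu t b = expR (c * t) * mu b.
Proof.
move=> Ab mu; apply: evolQ_geometric.
by elim => [|k IHk]; rewrite ?expr0 ?mul1r // iterS Ab IHk exprS mulrA.
Qed.

Lemma evolQ_left_eigen {nu c} : (forall b, A nu b = c * nu b) ->
  forall t b, evolQ nu t b = expR (c * t) * nu b.
Proof.
move=> Anu t b; apply: evolQ_geometric => k; elim: k b => [|k IHk] b.
  by rewrite expr0 mul1r.
rewrite iterS /actM; under eq_bigr do rewrite IHk -mulrA.
by rewrite -mulr_sumr -/(actM Q nu b) Anu exprS mulrCA mulrA.
Qed.

Lemma evolQ0 mu b : evolQ mu 0 b = mu b.
Proof.
rewrite /evolQ; apply: lim_near_cst => //.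
near=> m; rewrite -[m]prednK; last by near: m.
rewrite /series /= big_nat_recl //= big1 ?addr0; last first.
  by move=> i _; rewrite expr0n /= !mul0r.
by rewrite expr0 fact0 divr1 mul1r.
Unshelve. all: by end_near.
Qed.

End RowExponential.

Section LinearODE.
Context {R : realType}.

Lemma is_derive_expRM (c t : R) :
  is_derive t (1 : R) (fun s => expR (c * s)) (c * expR (c * t)).
Proof.
have := is_derive1_comp (is_derive_expR ((c \*: id) t))
  (is_deriveZ c (is_derive_id t (1 : R))).
by move/is_derive_eq; apply; rewrite mulrC; congr (_ * _); exact: mulr1.
Qed.

Lemma ode_integrating_factor_le {f g : R -> R} {c k a : R} :
  (forall t, is_derive t (1 : R) f (- c * f t + g t)) ->
  (forall t, a < t -> g t <= c * k) ->
  forall t, a <= t -> expR (c * t) * (f t - k) <= expR (c * a) * (f a - k).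
Proof.
move=> f_ode g_le t at_.
pose phi s := expR (c * s) * (f s - k).
have Dphi s : is_derive s (1 : R) phi (expR (c * s) * (g s - c * k)).
  have Dfk : is_derive s (1 : R) (fun u => f u - k) (- c * f s + g s).
    by apply: (is_derive_eq (is_deriveB (f_ode s) (is_derive_cst k s 1))); rewrite subr0.
  apply: (is_derive_eq (is_deriveM (is_derive_expRM c s) Dfk)).
  by rewrite /GRing.scale /=; ring.
apply: (@ler0_derive1_nincry _ phi a) => //.
- move=> x; rewrite in_itv /= andbT => ax.
  rewrite derive1E (@derive_val _ _ _ _ _ _ _ (Dphi x)).
  by rewrite mulr_ge0_le0 ?expR_ge0 // subr_le0 g_le.
- apply: continuous_subspaceT => x.
  by apply/differentiable_continuous/derivable1_diffP; case: (Dphi x).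
Qed.

(* With [k = e / 2] the integrating factor gives [f t <= e / 2 + K e^{-ct}]. *)
Lemma ode_eventually_le {f g : R -> R} {c e : R} : 0 < c -> 0 < e ->
  (forall t, is_derive t (1 : R) f (- c * f t + g t)) ->
  (\forall t \near +oo, g t <= c * (e / 2)) -> \forall t \near +oo, f t <= e.
Proof.
move=> c_gt0 e_gt0 f_ode [a [_ g_le]].
pose K := expR (c * a) * (f a - e / 2).
have eps_gt0 : 0 < e / 2 / (`|K| + 1) by rewrite !divr_gt0 // ltr_pwDr.
have [M [_ expR_small]] := (cvgrPdist_le _ _).1 (@cvgr_expR R) _ eps_gt0.
exists (Num.max a (M / c)); split; first by rewrite num_real.
move=> t; rewrite gt_max => /andP[at_ Mt].
have := expR_small (c * t); rewrite sub0r normrN ger0_norm ?expR_ge0 //.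
move/(_ _); rewrite -ltr_pdivrMl // mulrC => /(_ Mt) small.
have bound := ode_integrating_factor_le f_ode g_le t (ltW at_).
have : f t - e / 2 <= K * expR (- (c * t)).
  by rewrite expRN ler_pdivlMr ?expR_gt0 // mulrC.
have : K * expR (- (c * t)) <= e / 2.
  apply: (le_trans (ler_norm _)); rewrite normrM [`|expR _|]ger0_norm ?expR_ge0 //.
  apply: (le_trans (ler_wpM2l (normr_ge0 K) small)).
  rewrite mulrCA ler_piMr ?divr_ge0 //; first by rewrite ltW.
  by rewrite ler_pdivrMr ?ltr_pwDr // mul1r lerDl.
lra.
Qed.

Lemma ode_cvg0 {f g : R -> R} {c : R} : 0 < c ->
  (forall t, is_derive t (1 : R) f (- c * f t + g t)) ->
  g t @[t --> +oo] --> 0 -> f t @[t --> +oo] --> 0.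
Proof.
move=> c_gt0 f_ode g_cvg0; apply/cvgrPdist_le => e e_gt0.
have ce_gt0 : 0 < c * (e / 2) by rewrite mulr_gt0 ?divr_gt0.
have g_small := (cvgrPdist_le _ _).1 g_cvg0 _ ce_gt0.
have f_le : \forall t \near +oo, f t <= e.
  apply: (@ode_eventually_le f g c e) => //; near=> t.
  have : `|0 - g t| <= c * (e / 2) by near: t; exact: g_small.
  by rewrite sub0r normrN; exact: le_trans (ler_norm _).
have Nf_le : \forall t \near +oo, - f t <= e.
  apply: (@ode_eventually_le (fun t => - f t) (fun t => - g t) c e) => //.
    by move=> t; apply: (is_derive_eq (is_deriveN (f_ode t))); ring.
  near=> t; have : `|0 - g t| <= c * (e / 2) by near: t; exact: g_small.
  by rewrite sub0r; exact: le_trans (ler_norm _).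
near=> t; rewrite sub0r normrN ler_norml lerNl.
by apply/andP; split; [near: t; exact: Nf_le | near: t; exact: f_le].
Unshelve. all: by end_near.
Qed.

Lemma is_derive_vanishing_right {h : R -> R} {d : R} : is_derive 0 (1 : R) h d ->
  (forall t, 0 <= t -> h t = 0) -> d = 0.
Proof.
move=> [Dh <-] h0.
rewrite /derive (cvg_at_rightE _ _ Dh); apply: lim_near_cst => //.
near=> s; have s_gt0 : 0 < s by near: s; exact: nbhs_right_gt.
by rewrite /= addr0 -[s%:A]/(s * 1) mulr1 !h0 ?subrr ?scaler0 // ltW.
Unshelve. all: by end_near.
Qed.

End LinearODE.

Section TupleSums.
Variables (V : nmodType) (T : finType).

Lemma rev_tuple_inj n : injective (@rev_tuple n T).
Proof. by move=> p q /(congr1 val) /= /(congr1 rev); rewrite !revK => /val_inj. Qed.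

Lemma big_tuple_cons n (F : n.+1.-tuple T -> V) :
  \sum_p F p = \sum_z \sum_(q : n.-tuple T) F [tuple of z :: q].
Proof.
rewrite pair_big /=.
rewrite (reindex (fun u : T * n.-tuple T => [tuple of u.1 :: u.2])) //=.
exists (fun p : n.+1.-tuple T => (thead p, [tuple of behead p])) => [[z q]|p] _ /=.
  by congr pair; apply: val_inj.
by rewrite [RHS]tuple_eta.
Qed.

Lemma big_tuple_rcons n (F : n.+1.-tuple T -> V) :
  \sum_p F p = \sum_z \sum_(q : n.-tuple T) F (rcons_tuple q z).
Proof.
rewrite (reindex_inj (@rev_tuple_inj n.+1)) /= big_tuple_cons.
apply: eq_bigr => z _; rewrite (reindex_inj (@rev_tuple_inj n)) /=.
by apply: eq_bigr => q _; congr F; apply: val_inj; rewrite /= rev_cons revK.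
Qed.

End TupleSums.

Section MakiThompson.
Variables (R : realType) (N : nat).
Hypothesis N_gt0 : (1 <= N)%N.
Local Notation G := (grid N).
Local Notation Q := (@Qkill R N).
Local Notation d := (defpt N).

Definition v0 : G := (inord N, inord 1).
Definition v1 : G := (inord N.-1, inord 2).

Definition step (a b : G) : bool := stepUp a b || stepDown a b.

Definition rho (a b : G) : R :=
  if stepUp a b then (xc a * yc a)%:R else (yc a * (N - xc a))%:R.

Definition lam (b : G) : R := (N * yc b)%:R.

Definition pathSum (b : G) (L : nat) : R :=
  \sum_(p : L.+1.-tuple G | isPath N b L p) weight N L p.

Lemma xc_v0 : xc v0 = N. Proof. by rewrite /xc /= inordK. Qed.
Lemma yc_v0 : yc v0 = 1%N. Proof. by rewrite /yc /= inordK //; lia. Qed.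
Lemma xc_v1 : xc v1 = N.-1. Proof. by rewrite /xc /= inordK //; lia. Qed.
Lemma yc_v1 : yc v1 = 2%N. Proof. by rewrite /yc /= inordK //; lia. Qed.

Lemma grid_eqE (a b : G) : (a == b) = (xc a == xc b) && (yc a == yc b).
Proof. by case: a b => [a1 a2] [b1 b2]. Qed.

Lemma xc_leN (a : G) : (xc a <= N)%N.
Proof. by rewrite /xc -ltnS ltn_ord. Qed.

Lemma xy_v0E (a : G) : (xc a == N) && (yc a == 1%N) = (a == v0).
Proof. by rewrite grid_eqE xc_v0 yc_v0. Qed.

Lemma xy_v1E (a : G) : (xc a == N.-1) && (yc a == 2%N) = (a == v1).
Proof. by rewrite grid_eqE xc_v1 yc_v1. Qed.

Lemma inS_v0 : inS N v0.
Proof. by rewrite /inS xc_v0 yc_v0 !eqxx. Qed.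

Lemma inS_v1 : inS N v1.
Proof. by rewrite /inS xc_v1 yc_v1 /=; apply/orP; right; lia. Qed.

Lemma v1_neq_v0 : v1 != v0.
Proof. by rewrite grid_eqE xc_v1 yc_v1 xc_v0 yc_v0; lia. Qed.

Lemma inS_neq_v0 {a : G} : inS N a -> a != v0 ->
  (2 <= yc a)%N /\ (xc a + yc a <= N.+1)%N.
Proof. by rewrite /inS xy_v0E => /orP[->|/andP[]]. Qed.

Lemma pathL_step {a b : G} : inS N a -> step a b -> pathL N b = (pathL N a).+1.
Proof.
rewrite /step /pathL /inS => Sa /orP[]/andP[/eqP ? /eqP ?];
have := xc_leN a; move: Sa => /orP[/andP[/eqP ? /eqP ?]|/andP[? ?]]; lia.
Qed.

Lemma pathL_v0 : pathL N v0 = 0%N.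
Proof. by rewrite /pathL xc_v0 yc_v0; lia. Qed.

Lemma pathL_v1 : pathL N v1 = 1%N.
Proof. by rewrite /pathL xc_v1 yc_v1; lia. Qed.

Lemma pathL_ge2 {b : G} : inS N b -> b != v0 -> b != v1 -> (2 <= pathL N b)%N.
Proof.
move=> Sb b0; have [? ?] := inS_neq_v0 Sb b0.
by rewrite grid_eqE xc_v1 yc_v1 /pathL negb_and => /orP[]/eqP; lia.
Qed.

Lemma pathL_ind (P : G -> Prop) :
  (forall b, (forall a, (pathL N a < pathL N b)%N -> P a) -> P b) -> forall b, P b.
Proof.
move=> IH b; have [n] := ubnP (pathL N b); elim: n b => // n IHn b lt_b.
by apply: IH => a lt_ab; apply: IHn; lia.
Qed.

Lemma step_neq_v0 {a b : G} : inS N a -> step a b -> b != v0.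
Proof. by move=> Sa /(pathL_step Sa) Lb; apply/eqP => Eb; move: Lb; rewrite Eb pathL_v0. Qed.

Lemma step_irr (b : G) : step b b = false.
Proof. by apply/negbTE; rewrite /step /stepUp /stepDown; lia. Qed.

Lemma stepUp_v0v1 : stepUp v0 v1.
Proof. by rewrite /stepUp xc_v0 yc_v0 xc_v1 yc_v1 prednK ?eqxx. Qed.

Lemma rate_step (a b : G) : step a b -> rate N a b = rho a b.
Proof. by rewrite /step /rate /rho; case: ifP => // _ /= ->. Qed.

Lemma Qkill_offE (a b : G) : a != b ->
  Q a b = if inS N a && inS N b then rate N a b else 0.
Proof. by move=> /negbTE ab; rewrite /Qkill ab. Qed.

Lemma Qkill_diag (b : G) : inS N b -> Q b b = - lam b.
Proof. by move=> Sb; rewrite /Qkill Sb eqxx. Qed.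

Lemma Qkill_off_ge0 (a b : G) : a != b -> 0 <= Q a b.
Proof. by move=> ab; rewrite Qkill_offE // /rate; do 3!case: ifP => //. Qed.

Lemma Qkill_neq0 {a b : G} : a != b -> Q a b != 0 ->
  [/\ inS N a, inS N b & step a b].
Proof.
move=> ab; rewrite Qkill_offE //; case: ifP => [/andP[Sa Sb]|_]; last by rewrite eqxx.
by rewrite /rate /step; do 2!case: ifP => //; rewrite ?orbT ?eqxx.
Qed.

Lemma Qkill_nostep {a b : G} : a != b -> ~~ step a b -> Q a b = 0.
Proof. by move=> ab; apply: contraNeq => /(Qkill_neq0 ab)[]. Qed.

Lemma Qkill_pathL_lt {a b : G} : a != b -> Q a b != 0 -> (pathL N a < pathL N b)%N.
Proof. by move=> ab /(Qkill_neq0 ab)[Sa _ /(pathL_step Sa) ->]. Qed.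

Lemma actM_v0 (mu : G -> R) : actM Q mu v0 = - lam0 N * mu v0.
Proof.
rewrite /actM (bigD1 v0) //= big1 ?addr0.
  by rewrite Qkill_diag ?inS_v0 // mulrC /lam /lam0 yc_v0 muln1.
move=> a a0; have [->|] := eqVneq (Q a v0) 0; first by rewrite mulr0.
by move=> /(Qkill_neq0 a0)[Sa _ /(step_neq_v0 Sa)]; rewrite eqxx.
Qed.

Lemma actM_notinS (mu : G -> R) b : ~~ inS N b -> actM Q mu b = 0.
Proof. by move=> Sb; rewrite /actM big1 // => a _; rewrite /Qkill (negbTE Sb) andbF mulr0. Qed.

Lemma actM_inS (mu : G -> R) b : inS N b ->
  actM Q mu b = - lam b * mu b + \sum_(a | a != b) mu a * Q a b.
Proof. by move=> Sb; rewrite /actM (bigD1 b) //= Qkill_diag // mulrC. Qed.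

Lemma nth_rcons_tuple n (q : n.+1.-tuple G) z j : (j <= n)%N ->
  nth d (rcons_tuple q z) j = nth d q j.
Proof. by move=> jn; rewrite /= nth_rcons size_tuple ltnS jn. Qed.

Lemma nth_rcons_tuple_last n (q : n.+1.-tuple G) z : nth d (rcons_tuple q z) n.+1 = z.
Proof. by rewrite /= nth_rcons size_tuple ltnn eqxx. Qed.

Lemma steps_rcons n (q : n.+1.-tuple G) z :
  [forall j : 'I_n.+1, stepUp (nth d (rcons_tuple q z) j) (nth d (rcons_tuple q z) j.+1)
                    || stepDown (nth d (rcons_tuple q z) j) (nth d (rcons_tuple q z) j.+1)] =
  [forall j : 'I_n, stepUp (nth d q j) (nth d q j.+1) || stepDown (nth d q j) (nth d q j.+1)]
  && step (nth d q n) z.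
Proof.
apply/forallP/andP => [steps|[/forallP steps last_step] j].
  split; last by have := steps ord_max; rewrite /= nth_rcons_tuple // nth_rcons_tuple_last.
  apply/forallP => j; have := steps (widen_ord (leqnSn n) j).
  by rewrite /= !nth_rcons_tuple // ltnW.
have [jn|] := ltnP j n.
  by have := steps (Ordinal jn); rewrite /= !nth_rcons_tuple // ltnW.
rewrite leq_eqVlt ltnNge -ltnS ltn_ord orbF => /eqP <-.
by rewrite nth_rcons_tuple // nth_rcons_tuple_last.
Qed.

Lemma isPath_rcons n (b z : G) (q : n.+1.-tuple G) :
  isPath N b n.+1 (rcons_tuple q z) =
  [&& z == b, inS N z, isPath N (nth d q n) n q & step (nth d q n) z].
Proof.
rewrite /isPath nth_rcons_tuple // nth_rcons_tuple_last steps_rcons all_rcons eqxx.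
move: (xc _ == N) (yc _ == 1%N) (z == b) (inS N z) (all _ _) [forall _, _] (step _ _).
by do 7!case.
Qed.

Lemma isPath_last {n} {a : G} {q : n.+1.-tuple G} :
  isPath N a n q -> nth d q n = a /\ inS N a.
Proof.
case/and4P => _ /eqP <- all_inS _; split => //.
by move/allP: all_inS; apply; rewrite mem_nth // size_tuple.
Qed.

Lemma pathSum_notinS (b : G) L : ~~ inS N b -> pathSum b L = 0.
Proof. by move=> Sb; rewrite /pathSum big1 // => p /isPath_last[_]; rewrite (negbTE Sb). Qed.

Lemma pathSum_rcons n (b : G) : pathSum b n.+1 =
  \sum_a \sum_(q : n.+1.-tuple G | isPath N a n q && (step a b && inS N b))
     weight N n.+1 (rcons_tuple q b).
Proof.
rewrite /pathSum big_mkcond /= big_tuple_rcons.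
rewrite (bigD1 b) //= [X in _ + X]big1 ?addr0; last first.
  by move=> z zb; apply: big1 => q _; rewrite isPath_rcons (negbTE zb).
under [RHS]eq_bigr do rewrite big_mkcond.
rewrite [RHS]exchange_big /=; apply: eq_bigr => q _.
rewrite isPath_rcons eqxx /= (bigD1 (nth d q n)) //= [X in _ + X]big1 ?addr0; last first.
  by move=> a an; case: ifP => // /andP[/isPath_last[qa _]]; rewrite qa eqxx in an.
by case: (inS N b); case: (isPath _ _ _ _); case: (step _ _).
Qed.

Lemma weight_rcons n (q : n.+1.-tuple G) (b : G) : (1 <= n)%N ->
  weight N n.+1 (rcons_tuple q b) =
  weight N n q * (rho (nth d q n) b / (lam b - lam0 N)).
Proof.
move=> n_gt0; rewrite /weight /= nth_rcons_tuple_last big_nat_recr //=.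
rewrite nth_rcons_tuple // nth_rcons_tuple_last.
under eq_big_nat => j /andP[_ jn] do rewrite !nth_rcons_tuple ?(ltnW jn) //.
rewrite /rho /lam; set P := \prod_(1 <= i < n) _; set r := (if _ then _ else _).
by move: P r (lam0 N) ((N * yc b)%:R) ((N * yc (nth d q n))%:R) => P r l u v; ring.
Qed.

Lemma weight_rcons1 (q : 1.-tuple G) (b : G) :
  weight N 1 (rcons_tuple q b) = lam0 N / (lam b - lam0 N).
Proof. by rewrite /weight /= big_geq // mulr1 nth_rcons_tuple_last. Qed.

Lemma isPath0_v0 (q : 1.-tuple G) : isPath N v0 0 q = (q == [tuple v0]).
Proof.
have -> : q = [tuple thead q].
  by rewrite [LHS]tuple_eta; congr [tuple of _ :: _]; rewrite tuple0.
rewrite /isPath /= xy_v0E.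
have -> : [forall j : 'I_0, stepUp (nth d [:: thead q] j) (nth d [:: thead q] j.+1)
    || stepDown (nth d [:: thead q] j) (nth d [:: thead q] j.+1)] by apply/forallP => -[].
rewrite andbT; have [->|q0] := eqVneq (thead q) v0; first by rewrite inS_v0 eqxx.
apply/esym/negbTE; apply: contra q0 => /eqP/(congr1 (fun t : 1.-tuple G => thead t)).
by rewrite !theadE => ->.
Qed.

Lemma pathSum_v1 : pathSum v1 1 = lam0 N / ((N * 2)%:R - lam0 N).
Proof.
rewrite pathSum_rcons (bigD1 v0) //= [X in _ + X]big1 ?addr0; last first.
  move=> a a0; apply: big1 => q /andP[/and4P[q0 /eqP qa _ _] _]; exfalso.
  by move: a0; rewrite -qa -xy_v0E q0.
rewrite /step stepUp_v0v1 inS_v1 /=.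
under eq_bigl do rewrite andbT isPath0_v0.
by rewrite big_pred1_eq weight_rcons1 /lam yc_v1.
Qed.

Lemma lam_sub_gt0 (b : G) : (2 <= yc b)%N -> 0 < lam b - lam0 N.
Proof. by move=> y2; rewrite subr_gt0 /lam /lam0 ltr_nat; nia. Qed.

Lemma lam_sub_neq0 {b : G} : inS N b -> b != v0 -> lam b - lam0 N != 0.
Proof. by move=> Sb /(inS_neq_v0 Sb)[/lam_sub_gt0/gt_eqF ->]. Qed.

Lemma pathSum_rec n (b : G) : (1 <= n)%N -> inS N b -> b != v0 ->
  pathSum b n.+1 * (lam b - lam0 N) =
  \sum_a (if step a b then pathSum a n * rho a b else 0).
Proof.
move=> n_gt0 Sb b0; rewrite pathSum_rcons mulr_suml; apply: eq_bigr => a _.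
rewrite Sb; case: ifP => ab; last by rewrite big_pred0 ?mul0r // => q; rewrite andbF.
rewrite /pathSum !mulr_suml; apply: eq_big => [q|q]; rewrite !andbT // => qa.
by rewrite weight_rcons // (isPath_last qa).1 -mulrA divfK // lam_sub_neq0.
Qed.

Lemma nuU_v0 : nuU N v0 = 1 :> R.
Proof. by rewrite /nuU xy_v0E eqxx. Qed.

Lemma nuU_v1 : nuU N v1 = lam0 N / ((N * 2)%:R - lam0 N) :> R.
Proof. by rewrite /nuU xy_v0E xy_v1E (negbTE v1_neq_v0) eqxx. Qed.

Lemma nuU_pathSum (b : G) : b != v0 -> b != v1 ->
  nuU N b = (if inS N b then pathSum b (pathL N b) else 0 : R).
Proof. by move=> b0 b1; rewrite /nuU xy_v0E xy_v1E (negbTE b0) (negbTE b1). Qed.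

Lemma nuU_notinS (b : G) : ~~ inS N b -> nuU N b = 0 :> R.
Proof.
move=> Sb; have b0 : b != v0 by apply: contraNneq Sb => ->; exact: inS_v0.
have b1 : b != v1 by apply: contraNneq Sb => ->; exact: inS_v1.
by rewrite nuU_pathSum // (negbTE Sb).
Qed.

Lemma nuU_inS (a : G) : inS N a -> a != v0 -> nuU N a = pathSum a (pathL N a).
Proof.
move=> Sa a0; have [->|a1] := eqVneq a v1; first by rewrite nuU_v1 pathL_v1 pathSum_v1.
by rewrite nuU_pathSum // Sa.
Qed.

(* The only predecessor of [v1] in S* is [v0]. *)
Lemma nuU_balance_v1 :
  nuU N v1 * (lam v1 - lam0 N) = \sum_(a | a != v1) nuU N a * Q a v1.
Proof.
rewrite nuU_v1 /lam yc_v1 divfK; last by have := lam_sub_neq0 inS_v1 v1_neq_v0; rewrite /lam yc_v1.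
rewrite (bigD1 v0) 1?eq_sym ?v1_neq_v0 //= [X in _ + X]big1 ?addr0.
  rewrite nuU_v0 mul1r Qkill_offE 1?eq_sym ?v1_neq_v0 // inS_v0 inS_v1 /rate stepUp_v0v1.
  by rewrite xc_v0 yc_v0 muln1.
move=> a /andP[a1 a0]; have [->|/(Qkill_neq0 a1)[Sa _]] := eqVneq (Q a v1) 0; first by rewrite mulr0.
move: a0 Sa; rewrite /step /stepUp /stepDown xc_v1 yc_v1 -xy_v0E /inS.
by move=> + + /orP[]/andP[/eqP ? /eqP ?]; lia.
Qed.

Lemma nuU_balance (b : G) : inS N b -> b != v0 ->
  nuU N b * (lam b - lam0 N) = \sum_(a | a != b) nuU N a * Q a b.
Proof.
move=> Sb b0; have [->|b1] := eqVneq b v1; first exact: nuU_balance_v1.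
have L2 := pathL_ge2 Sb b0 b1.
rewrite nuU_pathSum // Sb; move: L2; case Lb: (pathL N b) => [|[|n]] // L2.
rewrite pathSum_rec // [RHS]big_mkcond; apply: eq_bigr => a _.
have [->|ab] := eqVneq a b; first by rewrite step_irr.
have [Sab|Sab] := boolP (step a b); last by rewrite Qkill_nostep // mulr0.
have [Sa|Sa] := boolP (inS N a); last by rewrite pathSum_notinS // mul0r Qkill_offE // (negbTE Sa) mulr0.
rewrite Qkill_offE // Sa Sb rate_step //; congr (_ * _).
have La : pathL N a = n.+1 by have := pathL_step Sa Sab; rewrite Lb => -[].
have a0 : a != v0 by apply/eqP => a0; move: La; rewrite a0 pathL_v0.
by rewrite nuU_inS // La.
Qed.

Lemma nuU_left_eigen b : actM Q (nuU N) b = - lam0 N * nuU N b.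
Proof.
have [Sb|Sb] := boolP (inS N b); last by rewrite actM_notinS // nuU_notinS // mulr0.
have [->|b0] := eqVneq b v0; first exact: actM_v0.
by rewrite actM_inS // -nuU_balance //; ring.
Qed.

(* Triangularity of [Q] along [pathL] forces a left eigenvector for [- lam0]
   to be determined by its value at [v0]. *)
Lemma left_eigen_uniq {phi : G -> R} : (forall b, ~~ inS N b -> phi b = 0) ->
  (forall b, actM Q phi b = - lam0 N * phi b) -> forall b, phi b = phi v0 * nuU N b.
Proof.
move=> phi_out phi_eigen; elim/pathL_ind => b IH.
have [Sb|Sb] := boolP (inS N b); last by rewrite phi_out // nuU_notinS // mulr0.
have [->|b0] := eqVneq b v0; first by rewrite nuU_v0 mulr1.
apply: (mulIf (lam_sub_neq0 Sb b0)); rewrite -mulrA nuU_balance // mulr_sumr.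
have -> : phi b * (lam b - lam0 N) = \sum_(a | a != b) phi a * Q a b.
  have := phi_eigen b; rewrite actM_inS // => eigen_b.
  by rewrite -[RHS](addKr (- lam b * phi b)) eigen_b; ring.
apply: eq_bigr => a ab; have [->|Qab] := eqVneq (Q a b) 0; first by rewrite !mulr0.
by rewrite IH ?mulrA // Qkill_pathL_lt.
Qed.

Lemma nuU_ge0 b : 0 <= nuU N b :> R.
Proof.
elim/pathL_ind: b => b IH.
have [Sb|Sb] := boolP (inS N b); last by rewrite nuU_notinS.
have [->|b0] := eqVneq b v0; first by rewrite nuU_v0.
have [y2 _] := inS_neq_v0 Sb b0.
rewrite (canRL (mulfK (lam_sub_neq0 Sb b0)) (nuU_balance b Sb b0)).
apply: divr_ge0; last by rewrite ltW ?lam_sub_gt0.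
apply: sumr_ge0 => a ab.
have [->|Qab] := eqVneq (Q a b) 0; first by rewrite mulr0.
by rewrite mulr_ge0 ?IH ?Qkill_pathL_lt ?Qkill_off_ge0.
Qed.

Lemma CN_gt0 : 0 < CN N :> R.
Proof.
rewrite /CN (bigD1 v0) ?inS_v0 //= nuU_v0 ltr_pwDl // sumr_ge0 // => a _.
exact: nuU_ge0.
Qed.

Local Notation E := (evolQ Q).

Lemma evolE (mu : G -> R) t b : evol N mu t b = E mu t b.
Proof. by []. Qed.

Lemma nustar_left_eigen b : actM Q (@nustar R N) b = - lam0 N * nustar N b.
Proof.
rewrite /actM /nustar; under eq_bigr do rewrite mulrAC.
by rewrite -mulr_suml -/(actM Q (nuU N) b) nuU_left_eigen mulrA.
Qed.

Lemma sum_nustar : \sum_(a | inS N a) nustar N a = 1 :> R.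
Proof. by rewrite /nustar -mulr_suml -/(CN N) divff // gt_eqF // CN_gt0. Qed.

Lemma nustar_isQSD : @isQSD R N (@nustar R N).
Proof.
split.
  split; last exact: sum_nustar.
  - by move=> a; rewrite /nustar divr_ge0 ?nuU_ge0 // ltW // CN_gt0.
  - by move=> a Sa; rewrite /nustar nuU_notinS // mul0r.
move=> t t_ge0 A AS; rewrite /condP.
under eq_bigr do rewrite evolE (evolQ_left_eigen _ nustar_left_eigen).
under [X in _ / X]eq_bigr do rewrite evolE (evolQ_left_eigen _ nustar_left_eigen).
by rewrite -!mulr_sumr sum_nustar mulr1 mulrC mulKf // gt_eqF // expR_gt0.
Qed.

Lemma nustar_v0_gt0 : 0 < @nustar R N v0.
Proof. by rewrite /nustar nuU_v0 mul1r invr_gt0 CN_gt0. Qed.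

(* The mass at [v0] decays like [exp (- lam0 t)] whatever the initial law, so
   the QSD identity at the states [v0] and [b] identifies the normalisation. *)
Lemma QSD_evolE {mu : G -> R} : isQSD N mu -> 0 < mu v0 ->
  forall t b, 0 <= t -> E mu t b = expR (- lam0 N * t) * mu b.
Proof.
move=> [[_ mu_out _] mu_qsd] mu0 t b t_ge0.
have E0 : E mu t v0 = expR (- lam0 N * t) * mu v0.
  exact: evolQ_autonomous_coord _ actM_v0 _ _.
have [Sb|Sb] := boolP (inS N b); last first.
  rewrite (@evolQ_autonomous_coord _ _ Q _ 0) ?mu_out ?mulr0 // => nu.
  by rewrite actM_notinS // mul0r.
have set1_sub c : inS N c -> {subset [set c]%SET <= inS N} by move=> Sc x /set1P ->.
have := mu_qsd t t_ge0 _ (set1_sub _ inS_v0).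
have := mu_qsd t t_ge0 _ (set1_sub _ Sb).
rewrite /condP !big_set1 !evolE; set Z := \sum_(c | inS N c) E mu t c.
have [Z0 _ E0Z|Z0 Eb E0Z] := eqVneq Z 0.
  by move: mu0; rewrite -E0Z Z0 invr0 mulr0 ltxx.
have ZE : Z = expR (- lam0 N * t).
  move: E0Z; rewrite E0 => /(congr1 (fun v => v * Z)); rewrite divfK // => E0Z.
  by apply: (mulIf (lt0r_neq0 mu0)); rewrite mulrC -E0Z.
by rewrite -(divfK Z0 (E mu t b)) Eb ZE mulrC.
Qed.

(* Differentiating [mu e^{tQ} = e^{-lam0 t} mu] at [t = 0+]. *)
Lemma QSD_left_eigen {mu : G -> R} : isQSD N mu -> 0 < mu v0 ->
  forall b, actM Q mu b = - lam0 N * mu b.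
Proof.
move=> mu_qsd mu0 b.
pose h := (fun s => E mu s b) - (mu b \*: (fun s => expR (- lam0 N * s))).
have Dh : is_derive 0 (1 : R) h
    (E (actM Q mu) 0 b - mu b *: (- lam0 N * expR (- lam0 N * 0))).
  exact: is_deriveB (evolQ_derive _ _ _ _) (is_deriveZ _ (is_derive_expRM _ _)).
have /(is_derive_vanishing_right Dh) : forall t, 0 <= t -> h t = 0.
  move=> t t_ge0; change (E mu t b - mu b * expR (- lam0 N * t) = 0).
  by rewrite (QSD_evolE mu_qsd) // mulrC subrr.
move/eqP; rewrite subr_eq0 evolQ0 mulr0 expR0 mulr1 => /eqP ->.
by rewrite /GRing.scale /= mulrC.
Qed.

Lemma QSD_uniq (mu : G -> R) : isQSD N mu -> 0 < mu v0 -> forall a, mu a = nustar N a.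
Proof.
move=> mu_qsd mu0; have [[_ mu_out mu_sum] _] := mu_qsd.
have muE := left_eigen_uniq mu_out (QSD_left_eigen mu_qsd mu0).
have mu0E : mu v0 = (CN N)^-1.
  apply: (mulIf (lt0r_neq0 CN_gt0)); rewrite mulVf ?lt0r_neq0 ?CN_gt0 //.
  by rewrite -mu_sum /CN mulr_sumr; apply: eq_bigr => b _; rewrite [RHS]muE.
by move=> a; rewrite muE mu0E /nustar mulrC.
Qed.

Definition yaglom_err (b : G) (t : R) : R :=
  expR (lam0 N * t) * E (@startN1 R N) t b - nuU N b.

Lemma startN1E : @startN1 R N = fun a => if a == v0 then 1 else 0.
Proof. by apply/funext => a; rewrite /startN1 xy_v0E. Qed.

(* The terms not involving the errors cancel by [nuU_balance]. *)
Lemma yaglom_err_derive {b : G} : inS N b -> b != v0 -> forall t,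
  is_derive t (1 : R) (yaglom_err b)
    (- (lam b - lam0 N) * yaglom_err b t + \sum_(c | c != b) yaglom_err c t * Q c b).
Proof.
move=> Sb b0 t.
have D := is_deriveB (is_deriveM (is_derive_expRM (lam0 N) t) (evolQ_derive Q (startN1 N) b t))
  (is_derive_cst (nuU N b) t 1).
apply: (is_derive_eq D); rewrite /yaglom_err subr0.
have -> : \sum_(c | c != b) (expR (lam0 N * t) * E (startN1 N) t c - nuU N c) * Q c b =
    expR (lam0 N * t) * \sum_(c | c != b) E (startN1 N) t c * Q c b
    - nuU N b * (lam b - lam0 N).
  by rewrite nuU_balance // mulr_sumr -sumrB; apply: eq_bigr => c _; ring.
rewrite /GRing.scale /= evolQ_actM (bigD1 b) //= Qkill_diag //.
set e := expR _; set S := \sum_(i | i != b) _.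
by move: (E _ t b) (nuU N b) (lam b) (lam0 N) => u v l l0; ring.
Qed.

Lemma yaglom_err_cvg0 b : yaglom_err b t @[t --> +oo] --> 0.
Proof.
elim/pathL_ind: b => b IH.
have [Sb|Sb] := boolP (inS N b); last first.
  apply: cvg_near_cst; near=> t; rewrite /yaglom_err nuU_notinS //.
  rewrite (@evolQ_autonomous_coord _ _ Q _ 0); last by move=> nu; rewrite actM_notinS // mul0r.
  rewrite startN1E ifN ?mulr0 ?subrr //; apply: contraNneq Sb => ->; exact: inS_v0.
have [->|b0] := eqVneq b v0.
  apply: cvg_near_cst; near=> t.
  rewrite /yaglom_err (evolQ_autonomous_coord _ actM_v0) startN1E eqxx mulr1 nuU_v0.
  by rewrite mulNr -expRD addrN expR0 subrr.
have [y2 _] := inS_neq_v0 Sb b0.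
apply: (ode_cvg0 (lam_sub_gt0 _ y2) (yaglom_err_derive Sb b0)).
rewrite [X in _ --> X](_ : 0 = \sum_(c | c != b) (0 : R)); last by rewrite big1.
apply: cvg_big => //; first exact: add_continuous.
move=> c cb; have [->|Qcb] := eqVneq (Q c b) 0.
  by apply: cvg_near_cst; near=> t; rewrite mulr0.
by rewrite -(mul0r (Q c b)); apply: cvgM; [apply: IH; exact: Qkill_pathL_lt | exact: cvg_cst].
Unshelve. all: by end_near.
Qed.

Lemma condP_startN1E a t : condP N (@startN1 R N) t [set a]%SET =
  (yaglom_err a t + nuU N a) / \sum_(b | inS N b) (yaglom_err b t + nuU N b).
Proof.
rewrite /condP big_set1 /yaglom_err.
under [in RHS]eq_bigr do rewrite subrK.
rewrite subrK -mulr_sumr invfM mulrACA mulfV ?mul1r //.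
exact: lt0r_neq0 (expR_gt0 _).
Qed.

Lemma condP_startN1_cvg a :
  condP N (@startN1 R N) t [set a]%SET @[t --> +oo] --> nustar N a.
Proof.
under eq_fun do rewrite condP_startN1E.
have -> : @nustar R N a = (0 + nuU N a) / \sum_(b | inS N b) (0 + nuU N b).
  by rewrite /nustar /CN add0r; under [in RHS]eq_bigr do rewrite add0r.
apply: cvgM; first by apply: cvgD; [exact: yaglom_err_cvg0 | exact: cvg_cst].
apply: cvgV.
  by under eq_bigr do rewrite add0r; rewrite lt0r_neq0 // CN_gt0.
apply: cvg_big => //; first exact: add_continuous.
by move=> b _; apply: cvgD; [exact: yaglom_err_cvg0 | exact: cvg_cst].
Qed.

End MakiThompson.

Theorem mainTheorem4 (R : realType) (N : nat) (hN : (1 <= N)%N) :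
  [/\ @isQSD R N (@nustar R N),
      0 < @nustar R N (inord N, inord 1),
      (forall mu : grid N -> R, @isQSD R N mu ->
         0 < mu (inord N, inord 1) -> forall a, mu a = @nustar R N a)
    & forall a : grid N, inS N a ->
        condP N (@startN1 R N) t [set a]%SET @[t --> +oo] --> @nustar R N a].
Proof.
split.
- exact: nustar_isQSD.
- exact: nustar_v0_gt0.
- exact: QSD_uniq.
- by move=> a _; exact: condP_startN1_cvg.
Qed.
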